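(* Fix an integer $k\geq1$ and $V=\{0,\ldots,k\}$. A Boolean function $\varphi$ on $V$ is fragmentable if and only if $\mathrm{eul}(\varphi)=0$.
   Context: A valuation is a subset $\nu\subseteq V$; $\nu^{(l)}$ is $\nu$ with membership of $l$ flipped. A Boolean function on $V$ is a map $\varphi:2^V\to\{\text{false},\text{true}\}$; $\mathrm{eul}(\varphi)=\sum_{\nu:\varphi(\nu)=\text{true}}(-1)^{|\nu|}$. $\varphi$ is degenerate if there is $l\in V$ with $\varphi(\nu)=\varphi(\nu^{(l)})$ for all $\nu$. Two functions are disjoint if no valuation satisfies both. A $\neg$-$\vee$-template is a Boolean circuit all of whose internal gates are $\neg$- or $\vee$-gates (a single leaf is allowed); its leaves $l_0,\ldots,l_n$ are holes. $T[\varphi_0,\ldots,\varphi_n]$ is the function obtained by substituting $\varphi_i$ for $l_i$; it is deterministic if, for every $\vee$-gate of the template, any two distinct inputs compute disjoint functions. $\varphi$ is fragmentable if there exist a $\neg$-$\vee$-template $T$ and degenerate functions $\varphi_0,\ldots,\varphi_n$ (one per hole) such that $T[\varphi_0,\ldots,\varphi_n]$ is deterministic and equivalent to $\varphi$. *)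

From mathcomp Require Import all_boot all_order all_algebra.
Set Implicit Arguments. Unset Strict Implicit. Unset Printing Implicit Defensive.
Import Order.TTheory GRing.Theory Num.Theory.

(* Variables V = {0,...,k} are the ordinals 'I_k.+1; a valuation is a subset of V. *)
Definition valuation (k : nat) := {set 'I_k.+1}.

Definition bfun (k : nat) := valuation k -> bool.

Definition flip k (nu : valuation k) (l : 'I_k.+1) : valuation k :=
  [set x | (x \in nu) != (x == l)].

Definition eul k (phi : bfun k) : int :=
  (\sum_(nu : {set 'I_k.+1} | phi nu) (-1) ^+ #|nu|)%R.

Definition degenerate k (phi : bfun k) : Prop :=
  exists l : 'I_k.+1, forall nu, phi nu = phi (flip nu l).

Definition disjoint_fun k (phi psi : bfun k) : Prop :=
  forall nu, ~~ (phi nu && psi nu).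

(* neg-or templates (formula form of circuits; holes are labelled by
   natural numbers, a hole label occurring several times models sharing
   of one hole leaf); Or-gates have arbitrary fan-in. *)
Inductive template : Type :=
| Hole of nat
| Neg of template
| Or of seq template.

Fixpoint tsubst k (sub : nat -> bfun k) (t : template) (nu : valuation k) : bool :=
  match t with
  | Hole i => sub i nu
  | Neg t' => ~~ tsubst sub t' nu
  | Or ts => (fix evs (ts : seq template) : bool :=
                match ts with
                | [::] => false
                | t' :: ts' => tsubst sub t' nu || evs ts'
                end) ts
  end.

Fixpoint holes (t : template) : seq nat :=
  match t with
  | Hole i => [:: i]
  | Neg t' => holes t'
  | Or ts => (fix hs (ts : seq template) : seq nat :=
                match ts with
                | [::] => [::]
                | t' :: ts' => holes t' ++ hs ts'
                end) ts
  end.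

Inductive deterministic k (sub : nat -> bfun k) : template -> Prop :=
| det_hole i : deterministic sub (Hole i)
| det_neg t : deterministic sub t -> deterministic sub (Neg t)
| det_or ts :
    (forall i, i < size ts -> deterministic sub (nth (Or [::]) ts i)) ->
    (forall i j, i < size ts -> j < size ts -> i != j ->
       disjoint_fun (tsubst sub (nth (Or [::]) ts i))
                    (tsubst sub (nth (Or [::]) ts j))) ->
    deterministic sub (Or ts).

Definition fragmentable k (phi : bfun k) : Prop :=
  exists (T : template) (sub : nat -> bfun k),
    (forall i, i \in holes T -> degenerate (sub i)) /\
    deterministic sub T /\
    (forall nu, tsubst sub T nu = phi nu).

From mathcomp Require Import all_boot all_order all_algebra zify.
From Stdlib Require Import FunctionalExtensionality.
Set Implicit Arguments. Unset Strict Implicit. Unset Printing Implicit Defensive.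
Import Order.TTheory GRing.Theory Num.Theory.

(* A degenerate function has Euler characteristic 0, and [eul] changes sign
   under negation and is additive on disjoint disjunctions; so every function
   generated from degenerate ones by these two operations (these are exactly
   the fragmentable functions) has [eul] 0.
   Conversely, let [eul f = 0].  If [f] has a model [a], it also has a model
   [b] of the opposite parity, for otherwise all terms of [eul f] have the
   same sign.  The indicator of [{a, b}] is generated: [a] and [b] are at odd
   Hamming distance, and stepping twice from [a] towards [b], through [a1] and
   [a2], gives [{a, b} = ({a, a1} + {a2, b}) - {a1, a2}] where [{a, a1}] and
   [{a1, a2}] are degenerate.  Removing [{a, b}] from [f] keeps [eul] zero and
   leaves fewer models. *)

Fixpoint all_templates (P : template -> Prop) (ts : seq template) : Prop :=
  if ts is t :: ts' then P t /\ all_templates P ts' else True.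

Definition template_ind (P : template -> Prop)
    (P_Hole : forall i, P (Hole i)) (P_Neg : forall t, P t -> P (Neg t))
    (P_Or : forall ts, all_templates P ts -> P (Or ts)) :
  forall t, P t :=
  fix F t := match t return P t with
  | Hole i => P_Hole i
  | Neg t' => P_Neg t' (F t')
  | Or ts => P_Or ts ((fix G ts : all_templates P ts :=
                         match ts with [::] => I | t' :: ts' => conj (F t') (G ts') end) ts)
  end.

Fixpoint relabel (r : nat -> nat) (t : template) : template :=
  match t with
  | Hole i => Hole (r i)
  | Neg t' => Neg (relabel r t')
  | Or ts => Or (map (relabel r) ts)
  end.

Lemma tsubst_Or k (sub : nat -> bfun k) ts nu :
  tsubst sub (Or ts) nu = has (fun t => tsubst sub t nu) ts.
Proof. by elim: ts => //= t ts ->. Qed.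

Lemma holes_Or ts : holes (Or ts) = flatten (map holes ts).
Proof. by elim: ts => //= t ts ->. Qed.

Lemma mem_holes_Or ts j : j < size ts ->
  {subset holes (nth (Or [::]) ts j) <= holes (Or ts)}.
Proof.
move=> lt_j i hi; rewrite holes_Or; apply/flattenP.
exists (holes (nth (Or [::]) ts j)) => //.
by rewrite -(nth_map (Or [::]) [::]) // mem_nth ?size_map.
Qed.

Lemma tsubst_relabel k (sub : nat -> bfun k) r t :
  tsubst sub (relabel r t) =1 tsubst (sub \o r) t.
Proof.
elim/template_ind: t => [i|t IH|ts IH] nu; rewrite [relabel _ _]/=.
- by [].
- by rewrite /= IH.
rewrite !tsubst_Or has_map; elim: ts IH => //= t ts IHts [Ht /IHts ->].
by rewrite Ht.
Qed.

Lemma holes_relabel r t : holes (relabel r t) = map r (holes t).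
Proof.
elim/template_ind: t => [//|t IH|ts IH]; first exact: IH.
rewrite [relabel _ _]/= !holes_Or -map_comp; elim: ts IH => //= t ts IHts [Ht /IHts Hts].
by rewrite map_cat Ht Hts.
Qed.

Lemma deterministic_relabel k (sub : nat -> bfun k) r t :
  deterministic (sub \o r) t -> deterministic sub (relabel r t).
Proof.
elim=> [i|t' _ IH|ts _ IH disj] /=; try by constructor.
constructor; rewrite size_map => i lt_i.
  by rewrite (nth_map (Or [::])) //; apply: IH.
move=> j lt_j neq_ij nu; rewrite !(nth_map (Or [::])) // !tsubst_relabel.
exact: disj.
Qed.

Section Generated.

Variable k : nat.
Implicit Types (f g : bfun k) (nu : valuation k).

Inductive generated : bfun k -> Prop :=
| gen_degenerate f : degenerate f -> generated f
| gen_neg f : generated f -> generated (fun nu => ~~ f nu)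
| gen_or f g : generated f -> generated g -> disjoint_fun f g ->
    generated (fun nu => f nu || g nu)
| gen_eq f g : generated f -> f =1 g -> generated g.

Lemma degenerate_const (b : bool) : degenerate (fun _ : valuation k => b).
Proof. by exists ord0. Qed.

Lemma generated_diff f g : generated f -> generated g ->
  (forall nu, g nu -> f nu) -> generated (fun nu => f nu && ~~ g nu).
Proof.
move=> gen_f gen_g sub_gf; apply: gen_eq (gen_neg (gen_or (gen_neg gen_f) gen_g _)) _.
  by move=> nu; apply/negP => /andP[/negP nfnu /sub_gf].
by move=> nu /=; rewrite negb_or negbK.
Qed.

Lemma generated_Or (sub : nat -> bfun k) ts :
  (forall i, i < size ts -> generated (tsubst sub (nth (Or [::]) ts i))) ->
  (forall i j, i < size ts -> j < size ts -> i != j ->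
     disjoint_fun (tsubst sub (nth (Or [::]) ts i)) (tsubst sub (nth (Or [::]) ts j))) ->
  generated (tsubst sub (Or ts)).
Proof.
elim: ts => [_ _|t ts IH gen_ts disj_ts]; first exact/gen_degenerate/degenerate_const.
apply: gen_or (gen_ts 0 _) (IH (fun i => gen_ts i.+1) _) _ => //.
  by move=> i j lt_i lt_j neq_ij; apply: (disj_ts i.+1 j.+1).
move=> nu; rewrite tsubst_Or; apply/negP => /andP[t_nu /(has_nthP (Or [::]))[j lt_j tj_nu]].
by have /negP[] := disj_ts 0 j.+1 erefl lt_j erefl nu; rewrite /= t_nu tj_nu.
Qed.

Lemma fragmentable_generated f : fragmentable f -> generated f.
Proof.
move=> [T [sub [deg_holes [det_T T_f]]]]; apply: gen_eq T_f.
elim: det_T deg_holes => [i|t _ IH|ts _ IH disj] deg_holes.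
- by apply/gen_degenerate/deg_holes; rewrite inE.
- exact/gen_neg/IH.
apply: generated_Or disj => i lt_i; apply: IH => // j hj.
exact/deg_holes/(mem_holes_Or lt_i).
Qed.

End Generated.

Section FragmentableClosure.

Variable k : nat.
Implicit Types (f g : bfun k) (nu : valuation k).

Lemma fragmentable_degenerate f : degenerate f -> fragmentable f.
Proof.
move=> deg_f; exists (Hole 0), (fun=> f).
by split; [move=> i _ | split; [constructor | ]].
Qed.

Lemma fragmentable_neg f : fragmentable f -> fragmentable (fun nu => ~~ f nu).
Proof.
move=> [T [sub [deg_holes [det_T T_f]]]]; exists (Neg T), sub.
by split=> //; split=> [|nu /=]; [constructor | rewrite T_f].
Qed.

Lemma fragmentable_eq f g : fragmentable f -> f =1 g -> fragmentable g.
Proof.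
move=> [T [sub [deg_holes [det_T T_f]]]] fg; exists T, sub.
by split=> //; split=> // nu; rewrite T_f.
Qed.

(* The two templates get disjoint hole labels: the even and the odd ones. *)
Lemma fragmentable_or f g : fragmentable f -> fragmentable g -> disjoint_fun f g ->
  fragmentable (fun nu => f nu || g nu).
Proof.
move=> [T1 [s1 [deg1 [det1 T1_f]]]] [T2 [s2 [deg2 [det2 T2_g]]]] disj_fg.
pose sub n := if odd n then s2 n./2 else s1 n./2.
have s1E : sub \o double = s1.
  by apply: functional_extensionality => i; rewrite /= /sub odd_double doubleK.
have s2E : sub \o (fun i => i.*2.+1) = s2.
  by apply: functional_extensionality => i; rewrite /= /sub /= odd_double uphalf_double.
have T1E : tsubst sub (relabel double T1) =1 f by move=> nu; rewrite tsubst_relabel s1E.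
have T2E : tsubst sub (relabel (fun i => i.*2.+1) T2) =1 g.
  by move=> nu; rewrite tsubst_relabel s2E.
exists (Or [:: relabel double T1; relabel (fun i => i.*2.+1) T2]), sub; split; [|split].
- move=> i; rewrite /= cats0 !holes_relabel mem_cat => /orP[] /mapP[j hj ->].
    by rewrite -[sub _]/((sub \o double) j) s1E; apply: deg1.
  by rewrite -[sub _]/((sub \o (fun i => i.*2.+1)) j) s2E; apply: deg2.
- constructor=> [[|[|i]] //= _|[|[|i]] [|[|j]] //= _ _ _ nu].
  + by apply: deterministic_relabel; rewrite s1E.
  + by apply: deterministic_relabel; rewrite s2E.
  + by rewrite T1E T2E; apply: disj_fg.
  + by rewrite T1E T2E andbC; apply: disj_fg.
- by move=> nu /=; rewrite T1E T2E orbF.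
Qed.

End FragmentableClosure.

Lemma generated_fragmentable k (f : bfun k) : generated f -> fragmentable f.
Proof.
elim=> {f} [f|f _|f g _ frag_f _ frag_g|f g _ frag_f].
- exact: fragmentable_degenerate.
- exact: fragmentable_neg.
- exact: fragmentable_or.
- exact: fragmentable_eq.
Qed.

Section EulerCharacteristic.

Variable k : nat.
Implicit Types (f g : bfun k) (a b nu : valuation k).

Definition symdiff a b : valuation k := [set x | (x \in a) != (x \in b)].

Lemma flipK (l : 'I_k.+1) : involutive (fun nu : valuation k => flip nu l).
Proof. by move=> nu; apply/setP => x; rewrite !inE; case: (x \in nu) (x == l) => [] []. Qed.

Lemma flipE nu l : flip nu l = symdiff nu [set l].
Proof. by apply/setP => x; rewrite !inE. Qed.

Lemma odd_card_symdiff a b : odd #|symdiff a b| = odd #|a| (+) odd #|b|.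
Proof.
have -> : symdiff a b = (a :|: b) :\: (a :&: b).
  by apply/setP => x; rewrite !inE; case: (x \in a) (x \in b) => [] [].
have sIU : a :&: b \subset a :|: b := subset_trans (subsetIl a b) (subsetUl a b).
rewrite -oddD -cardsUI -(cardsID (a :&: b) (a :|: b)) (setIidPr sIU).
by rewrite addnAC addnn oddD odd_double.
Qed.

Lemma odd_card_flip nu l : odd #|flip nu l| = ~~ odd #|nu|.
Proof. by rewrite flipE odd_card_symdiff cards1 addbT. Qed.

Lemma eq_eul f g : f =1 g -> eul f = eul g.
Proof. exact: eq_bigl. Qed.

(* Flipping the inert variable is a sign-reversing involution on the models. *)
Lemma eul_degenerate f : degenerate f -> eul f = 0%R.
Proof.
move=> [l fl]; suff : eul f = (- eul f)%R by lia.
rewrite {1}/eul (reindex_inj (inv_inj (flipK l))) /= /eul -sumrN.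
by apply: eq_big => nu; rewrite -?fl // -signr_odd odd_card_flip signrN signr_odd.
Qed.

Lemma eul_neg f : eul (fun nu => ~~ f nu) = (- eul f)%R.
Proof.
have := eul_degenerate (degenerate_const k true).
rewrite /eul (bigID f) /= => /eqP; rewrite addr_eq0 => /eqP ->.
by rewrite opprK.
Qed.

Lemma eul_or f g : disjoint_fun f g -> eul (fun nu => f nu || g nu) = (eul f + eul g)%R.
Proof.
move=> disj_fg; rewrite /eul (bigID f) /=; congr (_ + _)%R; apply: eq_bigl => nu.
  by case: (f nu) (g nu) => [] [].
by have := disj_fg nu; case: (f nu) (g nu) => [] [].
Qed.

Lemma generated_eul f : generated f -> eul f = 0%R.
Proof.
elim=> {f} [f /eul_degenerate //|f _ IH|f g _ IHf _ IHg disj|f g _ IH /eq_eul <- //].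
  by rewrite eul_neg IH oppr0.
by rewrite eul_or // IHf IHg addr0.
Qed.

End EulerCharacteristic.

Section ModelPairs.

Variable k : nat.
Implicit Types (f : bfun k) (a b c d nu : valuation k).

Lemma symdiff_eq0 a b : (symdiff a b == set0) = (a == b).
Proof.
apply/eqP/eqP => [/setP sd0|->]; last by apply/setP => x; rewrite !inE eqxx.
by apply/setP => x; have := sd0 x; rewrite !inE; case: (x \in a) (x \in b) => [] [].
Qed.

Lemma symdiff_flip a b l : l \in symdiff a b -> symdiff (flip a l) b = symdiff a b :\ l.
Proof.
rewrite inE => l_ab; apply/setP => x; rewrite !inE.
by have [->|] := eqVneq x l; [case: (l \in a) (l \in b) l_ab => [] [] | case: (x \in a)].
Qed.

Lemma card_symdiff_flip a b l :
  l \in symdiff a b -> #|symdiff (flip a l) b| = #|symdiff a b|.-1.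
Proof. by move=> l_ab; rewrite symdiff_flip // (cardsD1 l (symdiff a b)) l_ab. Qed.

Lemma degenerate_pred2_flip a l : degenerate (pred2 a (flip a l)).
Proof.
have flip_eq x y : (flip x l == y) = (x == flip y l) := can2_eq (flipK l) (flipK l) x y.
by exists l => nu /=; rewrite !flip_eq flipK orbC.
Qed.

(* {a, b} = ({a, c} + {d, b}) - {c, d} *)
Lemma generated_pred2_chain a c d b : uniq [:: a; c; d; b] ->
  generated (pred2 a c) -> generated (pred2 c d) -> generated (pred2 d b) ->
  generated (pred2 a b).
Proof.
move=> uniq_acdb gen_ac gen_cd gen_db.
have excl nu : (a == nu) + (c == nu) + (d == nu) + (b == nu) <= 1.
  by have := count_uniq_mem nu uniq_acdb; rewrite /= addn0 !addnA => ->; apply: leq_b1.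
apply: gen_eq (generated_diff (gen_or gen_ac gen_db _) gen_cd _) _ => nu /=;
  rewrite !(eq_sym nu);
  by case: (a == nu) (c == nu) (d == nu) (b == nu) (excl nu) => [] [] [] [].
Qed.

Lemma generated_pred2_odd n a b : #|symdiff a b| = n.*2.+1 -> generated (pred2 a b).
Proof.
elim: n a b => [|n IH] a b card_ab.
  have /cards1P[l sd_l] : #|symdiff a b| == 1 by rewrite card_ab.
  have -> : b = flip a l.
    apply/eqP; rewrite eq_sym -symdiff_eq0 symdiff_flip ?sd_l ?setDv ?set11 //.
  exact/gen_degenerate/degenerate_pred2_flip.
have [l l_ab] : exists l, l \in symdiff a b by apply/card_gt0P; rewrite card_ab.
set a1 := flip a l.
have card_a1b : #|symdiff a1 b| = n.*2.+2 by rewrite card_symdiff_flip // card_ab doubleS.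
have [l' l'_a1b] : exists l', l' \in symdiff a1 b by apply/card_gt0P; rewrite card_a1b.
set a2 := flip a1 l'.
have card_a2b : #|symdiff a2 b| = n.*2.+1 by rewrite card_symdiff_flip // card_a1b.
have sd_bb : symdiff b b = set0 by apply/eqP; rewrite symdiff_eq0.
apply: (@generated_pred2_chain a a1 a2 b).
- apply: (@map_uniq _ _ (fun x => #|symdiff x b|)).
  by rewrite /= card_ab card_a1b card_a2b sd_bb cards0 !inE; lia.
- exact/gen_degenerate/degenerate_pred2_flip.
- exact/gen_degenerate/degenerate_pred2_flip.
- exact: IH.
Qed.

Lemma generated_pred2 a b : odd #|a| != odd #|b| -> generated (pred2 a b).
Proof.
rewrite negb_eqb -odd_card_symdiff => odd_ab.
by apply: (@generated_pred2_odd #|symdiff a b|./2); rewrite -[LHS]odd_double_half odd_ab.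
Qed.

Lemma eul_eq0_opposite_parity f a : eul f = 0%R -> f a ->
  exists2 b, f b & odd #|b| != odd #|a|.
Proof.
move=> eul0 fa.
have [b /andP[fb ab]|same_parity] := pickP (fun b => f b && (odd #|b| != odd #|a|)).
  by exists b.
have : eul f = ((-1) ^+ odd #|a| *+ #|f|)%R.
  rewrite /eul -sumr_const; apply: eq_bigr => nu fnu.
  by have := same_parity nu; rewrite fnu -signr_odd => /negbFE/eqP ->.
rewrite eul0 => /esym/eqP; rewrite mulrn_eq0 signr_eq0 orbF => /eqP f0.
suff : 0 < #|f| by rewrite f0.
by apply/card_gt0P; exists a.
Qed.

Lemma eul_eq0_generated f : eul f = 0%R -> generated f.
Proof.
have [n] := ubnP #|f|; elim: n f => // n IH f; rewrite ltnS => card_f eul0.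
have [a fa|f0] := pickP f; last first.
  by apply: gen_eq (gen_degenerate (degenerate_const k false)) _ => nu; rewrite f0.
have [b fb ab] := eul_eq0_opposite_parity eul0 fa.
have gen_ab : generated (pred2 a b) by apply: generated_pred2; rewrite eq_sym.
pose g nu := f nu && ~~ pred2 a b nu.
have disj_g : disjoint_fun g (pred2 a b).
  by move=> nu; rewrite /g; case: (pred2 a b nu); rewrite ?andbF.
have g_ab_f : (fun nu => g nu || pred2 a b nu) =1 f.
  move=> nu; rewrite /g /=.
  by case: eqVneq => [->|_]; case: eqVneq => [->|_]; rewrite ?fa ?fb ?orbT ?orbF ?andbT.
have eul_g : eul g = 0%R.
  by have := eul_or disj_g; rewrite (eq_eul g_ab_f) eul0 (generated_eul gen_ab) addr0.
have card_g : #|g| < n.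
  apply: leq_trans card_f; apply/proper_card/properP; split.
    by apply/subsetP => nu; rewrite !unfold_in => /andP[].
  by exists a; rewrite !unfold_in /g ?fa //= eqxx.
exact: gen_eq (gen_or (IH g card_g eul_g) gen_ab disj_g) g_ab_f.
Qed.

End ModelPairs.

Theorem corollary5p4 (k : nat) (hk : 1 <= k) (phi : bfun k) :
  fragmentable phi <-> eul phi = 0%R.
Proof.
split=> [/fragmentable_generated/generated_eul //|/eul_eq0_generated].
exact: generated_fragmentable.
Qed.
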